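(* Let $\mathcal H$ and $\mathcal H_\varepsilon$ be separable Hilbert spaces, $\mathfrak a$ and $\mathfrak a_\varepsilon$ closed densely defined non-negative sesquilinear forms in $\mathcal H$ and $\mathcal H_\varepsilon$, and $\mathcal A$, $\mathcal A_\varepsilon$ the non-negative self-adjoint operators associated with them. Let $J_\varepsilon:\mathcal H\to\mathcal H_\varepsilon$ and $\check J_\varepsilon:\mathcal H_\varepsilon\to\mathcal H$ be bounded linear operators and $\delta_\varepsilon,\check\delta_\varepsilon,\nu_\varepsilon,\check\nu_\varepsilon\ge0$ constants such that $$\|(\mathcal A_\varepsilon+\mathrm I)^{-1}J_\varepsilon-J_\varepsilon(\mathcal A+\mathrm I)^{-1}\|_{\mathcal H\to\mathcal H_\varepsilon}\le\delta_\varepsilon,\qquad \|\check J_\varepsilon(\mathcal A_\varepsilon+\mathrm I)^{-1}-(\mathcal A+\mathrm I)^{-1}\check J_\varepsilon\|_{\mathcal H_\varepsilon\to\mathcal H}\le\check\delta_\varepsilon,$$ $$\|f\|^2_{\mathcal H}\le\|J_\varepsilon f\|^2_{\mathcal H_\varepsilon}+\nu_\varepsilon\mathfrak a[f,f]\ \ \forall f\in\mathrm{dom}(\mathfrak a),\qquad \|u\|^2_{\mathcal H_\varepsilon}\le\|\check J_\varepsilon u\|^2_{\mathcal H}+\check\nu_\varepsilon\mathfrak a_\varepsilon[u,u]\ \ \forall u\in\mathrm{dom}(\mathfrak a_\varepsilon).$$ Then for any $d\in(0,1)$ such that $\nu_\varepsilon,\check\nu_\varepsilon\in[0,\frac d{1-d})$,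 $$\mathrm{dist}_{\rm out}\Big(\sigma((\mathcal A_\varepsilon+\mathrm I)^{-1})\cap[d,1],\ \sigma((\mathcal A+\mathrm I)^{-1})\Big)\le\frac{\check\delta_\varepsilon}{\sqrt{1-\check\nu_\varepsilon(d^{-1}-1)}},$$ $$\mathrm{dist}_{\rm out}\Big(\sigma((\mathcal A+\mathrm I)^{-1})\cap[d,1],\ \sigma((\mathcal A_\varepsilon+\mathrm I)^{-1})\Big)\le\frac{\delta_\varepsilon}{\sqrt{1-\nu_\varepsilon(d^{-1}-1)}}.$$
   Context: The subscript $\varepsilon$ is merely a label (the spaces and operators need not depend on any parameter). For compact sets $X,Y\subset\mathbb R$, $\mathrm{dist}_{\rm out}(X,Y)=\sup_{x\in X}\inf_{y\in Y}|x-y|$ (with the supremum over the empty set taken as $0$). *)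

From HB Require Import structures.
From mathcomp Require Import all_boot all_order all_algebra.
From mathcomp Require Import boolp classical_sets reals constructive_ereal ereal.
From mathcomp Require Import complex.
Import Order.TTheory GRing.Theory Num.Theory.

Set Implicit Arguments.
Unset Strict Implicit.
Unset Printing Implicit Defensive.

Local Open Scope classical_set_scope.
Local Open Scope ring_scope.

Section HilbertDefs.
Variable R : realType.
Local Notation C := R[i].

Definition is_inner_product (H : lmodType C) (ip : H -> H -> C) : Prop :=
  [/\ (forall (a : C) (x y z : H), ip (a *: x + y) z = a * ip x z + ip y z),
      (forall x y : H, ip y x = ((ip x y)^*)%C),
      (forall x : H, 0 <= ip x x) &
      (forall x : H, ip x x = 0 -> x = 0)].

Definition hnorm (H : lmodType C) (ip : H -> H -> C) (x : H) : R :=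
  Num.sqrt (complex.Re (ip x x)).

Definition h_cauchy (H : lmodType C) (ip : H -> H -> C) (u : nat -> H) : Prop :=
  forall e : R, 0 < e -> exists N : nat, forall m n : nat,
    (N <= m)%N -> (N <= n)%N -> hnorm ip (u m - u n) < e.

Definition h_converges_to (H : lmodType C) (ip : H -> H -> C)
    (u : nat -> H) (l : H) : Prop :=
  forall e : R, 0 < e -> exists N : nat, forall n : nat,
    (N <= n)%N -> hnorm ip (u n - l) < e.

Definition is_separable_hilbert (H : lmodType C) (ip : H -> H -> C) : Prop :=
  [/\ is_inner_product ip,
      (forall u : nat -> H, h_cauchy ip u -> exists l, h_converges_to ip u l) &
      (exists s : nat -> H, forall (x : H) (e : R), 0 < e ->
          exists n, hnorm ip (x - s n) < e)].

Definition is_linear (H K : lmodType C) (T : H -> K) : Prop :=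
  forall (a : C) (x y : H), T (a *: x + y) = a *: T x + T y.

Definition bounded_linear (H K : lmodType C) (ipH : H -> H -> C)
    (ipK : K -> K -> C) (T : H -> K) : Prop :=
  is_linear T /\ exists M : R, forall x, hnorm ipK (T x) <= M * hnorm ipH x.

Definition opnorm (H K : lmodType C) (ipH : H -> H -> C)
    (ipK : K -> K -> C) (T : H -> K) : R :=
  sup [set hnorm ipK (T x) | x in [set x | hnorm ipH x <= 1]].

Definition closed_dd_nonneg_form (H : lmodType C) (ip : H -> H -> C)
    (D : set H) (a : H -> H -> C) : Prop :=
  [/\ D 0 /\ (forall (al : C) x y, D x -> D y -> D (al *: x + y)),
      (forall (al : C) x y z, D x -> D y -> D z ->
          a (al *: x + y) z = al * a x z + a y z /\
          a z (al *: x + y) = (al^*)%C * a z x + a z y),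
      (forall x, D x -> 0 <= a x x),
      (forall (x : H) (e : R), 0 < e -> exists2 y, D y & hnorm ip (x - y) < e) &
      (forall u : nat -> H, (forall n, D (u n)) ->
        (forall e : R, 0 < e -> exists N : nat, forall m n : nat,
           (N <= m)%N -> (N <= n)%N ->
           complex.Re (a (u m - u n) (u m - u n)) + hnorm ip (u m - u n) ^+ 2 < e) ->
        exists2 v, D v &
          (forall e : R, 0 < e -> exists N : nat, forall n : nat, (N <= n)%N ->
             complex.Re (a (u n - v) (u n - v)) + hnorm ip (u n - v) ^+ 2 < e))].

(* (DA, A) is the (self-adjoint) operator associated with the form (D, a)
   (first representation theorem): dom A = {u in D | exists w, a[u,v] = <w,v>
   for all v in D}, and a[u,v] = <A u, v>. *)
Definition associated_operator (H : lmodType C) (ip : H -> H -> C)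
    (D : set H) (a : H -> H -> C) (DA : set H) (A : H -> H) : Prop :=
  (forall u, DA u <-> (D u /\ exists w, forall v, D v -> a u v = ip w v)) /\
  (forall u v, DA u -> D v -> a u v = ip (A u) v).

Definition is_resolvent (H : lmodType C) (DA : set H) (A : H -> H)
    (Rv : H -> H) : Prop :=
  (forall f, DA (Rv f) /\ A (Rv f) + Rv f = f) /\
  (forall u, DA u -> Rv (A u + u) = u).

Definition real_spectrum (H : lmodType C) (ip : H -> H -> C) (T : H -> H) : set R :=
  [set lam : R | ~ exists S : H -> H, [/\ bounded_linear ip ip S,
      (forall x, S (T x - (lam%:C)%C *: x) = x) &
      (forall y, T (S y) - (lam%:C)%C *: S y = y)]].

(* dist_out(X, Y) = sup_{x in X} inf_{y in Y} |x - y|, sup over empty = 0,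
   inf over empty = +oo. *)
Definition dist_out (X Y : set R) : \bar R :=
  maxe 0%E (ereal_sup [set ereal_inf [set (`|x - y|)%:E | y in Y] | x in X]).

End HilbertDefs.

(* Both resolvents [Rs = (A + I)^-1] and [Rse = (Ae + I)^-1] are symmetric
   contractions, and [ae[Rse f, Rse f] = <f, Rse f> - |Rse f|^2].  Let [lam]
   be a point of the spectrum of [Rse] in [[d, 1]] and [u] a unit approximate
   eigenvector, [Rse u ~ lam u] (Weyl's criterion, which uses completeness).
   Then [ae[Rse u, Rse u] ~ lam - lam^2], so the hypothesis on [Jc] applied to
   [Rse u] gives [|Jc (Rse u)|^2 >~ lam^2 - nuc (lam - lam^2)
   >= lam^2 (1 - nuc (d^-1 - 1))], while the resolvent estimate gives
   [|Rs (Jc (Rse u)) - lam Jc (Rse u)| <~ deltac lam].  For a symmetric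
   bounded [T], [|(T - lam) w| <= rho |w|] forces the spectrum of [T] to meet
   [[lam - rho, lam + rho]]; letting the approximation error tend to [0] gives
   the first bound.  The second one is the same argument with the two spaces
   exchanged. *)

From HB Require Import structures.
From mathcomp Require Import all_boot all_order all_algebra.
From mathcomp Require Import boolp classical_sets reals constructive_ereal ereal.
From mathcomp Require Import complex normedtype sequences.
From mathcomp Require Import ring lra.
Import Order.TTheory GRing.Theory Num.Theory numFieldNormedType.Exports.
Local Open Scope classical_set_scope.
Local Open Scope ring_scope.
Set Implicit Arguments.
Unset Strict Implicit.
Local Notation Re := complex.Re.
Local Notation Im := complex.Im.

Lemma Re_realM (R : realType) (t : R) (z : R[i]) : Re (t%:C%C * z) = t * Re z.
Proof. by case: z => x y; rewrite /= mul0r subr0. Qed.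

Lemma quadratic_ge0_discriminant (R : realFieldType) (A c P : R) : 0 <= P ->
  (forall t, 0 <= A + 2 * t * c + t ^+ 2 * P) -> c ^+ 2 <= A * P.
Proof.
move=> P_ge0 quad_ge0; have [P_eq0|P_neq0] := eqVneq P 0.
  have [->|c_neq0] := eqVneq c 0; first by rewrite P_eq0 expr2; lra.
  have := quad_ge0 (- (A + 1) / (2 * c)); rewrite P_eq0 mulr0 addr0.
  have -> : 2 * (- (A + 1) / (2 * c)) * c = - (A + 1) by field; rewrite c_neq0.
  lra.
have P_gt0 : 0 < P by rewrite lt_def P_neq0.
have := quad_ge0 (- c / P).
have -> : A + 2 * (- c / P) * c + (- c / P) ^+ 2 * P = (A * P - c ^+ 2) / P by field.
by rewrite pmulr_lge0 ?invr_gt0 // subr_ge0.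
Qed.

Lemma le0_small_multiples (R : realFieldType) (z K e0 : R) : 0 < e0 ->
  (forall eta, 0 < eta -> eta <= e0 -> z <= eta * K) -> z <= 0.
Proof.
move=> e0_gt0 small; rewrite leNgt; apply/negP => z_gt0.
have K_gt0 : 0 < K.
  by rewrite -(pmulr_rgt0 _ e0_gt0); exact: lt_le_trans (small e0 e0_gt0 (lexx _)).
pose eta := Order.min e0 (z / (2 * K)).
have eta_gt0 : 0 < eta by rewrite lt_min e0_gt0 divr_gt0 // mulr_gt0.
have : eta * K <= z / (2 * K) * K.
  by apply: ler_wpM2r; [exact: ltW | rewrite ge_min lexx orbT].
have -> : z / (2 * K) * K = z / 2 by field; rewrite gt_eqF.
have := small eta eta_gt0; rewrite ge_min lexx => /(_ isT); lra.
Qed.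

Section InnerProduct.
Variables (R : realType) (H : lmodType R[i]) (ip : H -> H -> R[i]).
Hypothesis hip : is_inner_product ip.
Local Notation nrm := (hnorm ip).

Lemma ipDl x y z : ip (x + y) z = ip x z + ip y z.
Proof. by case: hip => lin _ _ _; have := lin 1 x y z; rewrite scale1r mul1r. Qed.

Lemma ip0l z : ip 0 z = 0.
Proof. by apply: (addrI (ip 0 z)); rewrite -ipDl !addr0. Qed.

Lemma ipZl al x z : ip (al *: x) z = al * ip x z.
Proof. by case: hip => lin _ _ _; have := lin al x 0 z; rewrite !addr0 ip0l addr0. Qed.

Lemma ipNl x z : ip (- x) z = - ip x z.
Proof. by rewrite -scaleN1r ipZl mulN1r. Qed.

Lemma ipBl x y z : ip (x - y) z = ip x z - ip y z.
Proof. by rewrite ipDl ipNl. Qed.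

Lemma ip_conj x y : ip y x = ((ip x y)^*)%C.
Proof. by case: hip => _ + _ _; apply. Qed.

Lemma ipDr z x y : ip z (x + y) = ip z x + ip z y.
Proof. by rewrite ip_conj ipDl rmorphD /= -!ip_conj. Qed.

Lemma ipZr z al x : ip z (al *: x) = (al^*)%C * ip z x.
Proof. by rewrite ip_conj ipZl rmorphM /= -ip_conj. Qed.

Lemma ipNr z x : ip z (- x) = - ip z x.
Proof. by rewrite ip_conj ipNl rmorphN /= -ip_conj. Qed.

Lemma ipBr z x y : ip z (x - y) = ip z x - ip z y.
Proof. by rewrite ipDr ipNr. Qed.

Lemma Re_ipC x y : Re (ip y x) = Re (ip x y).
Proof. by rewrite ip_conj; case: (ip x y). Qed.

Lemma Re_ipZl (t : R) x y : Re (ip (t%:C%C *: x) y) = t * Re (ip x y).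
Proof. by rewrite ipZl Re_realM. Qed.

Lemma Re_ipZr (t : R) x y : Re (ip x (t%:C%C *: y)) = t * Re (ip x y).
Proof. by rewrite ipZr conjc_real Re_realM. Qed.

Lemma Re_ip_self_ge0 x : 0 <= Re (ip x x).
Proof. by case: hip => _ _ /(_ x) + _; rewrite lecE => /andP[]. Qed.

Lemma hnorm_sqr x : nrm x ^+ 2 = Re (ip x x).
Proof. by rewrite sqr_sqrtr // Re_ip_self_ge0. Qed.

Lemma hnorm_ge0 x : 0 <= nrm x.
Proof. exact: sqrtr_ge0. Qed.

Lemma hnorm_eq0 x : nrm x = 0 -> x = 0.
Proof.
move=> /eqP; rewrite sqrtr_eq0 => Re_le0; case: hip => _ _ ge0; apply.
apply/eqP; rewrite eq_complex (ger0_Im (ge0 x)) eqxx andbT.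
by rewrite eq_le Re_le0 Re_ip_self_ge0.
Qed.

Lemma hnorm0 : nrm 0 = 0.
Proof. by rewrite /hnorm ip0l sqrtr0. Qed.

Lemma hnorm_gt0 x : x <> 0 -> 0 < nrm x.
Proof. by move=> x_neq0; rewrite lt_def hnorm_ge0 andbT; apply/eqP => /hnorm_eq0. Qed.

Lemma hnormZ (t : R) x : nrm (t%:C%C *: x) = `|t| * nrm x.
Proof. by rewrite /hnorm Re_ipZl Re_ipZr mulrA -expr2 sqrtrM ?sqr_ge0 // sqrtr_sqr. Qed.

Lemma hnormN x : nrm (- x) = nrm x.
Proof. by rewrite /hnorm ipNl ipNr opprK. Qed.

Lemma hnorm_distC x y : nrm (x - y) = nrm (y - x).
Proof. by rewrite -hnormN opprB. Qed.

Lemma hnorm_normalized x : x <> 0 -> nrm ((nrm x)^-1%:C%C *: x) = 1.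
Proof.
move=> /hnorm_gt0 x_gt0.
by rewrite hnormZ ger0_norm ?invr_ge0 ?ltW // mulVf // gt_eqF.
Qed.

Lemma hnorm_sqrD x y : nrm (x + y) ^+ 2 = nrm x ^+ 2 + 2 * Re (ip x y) + nrm y ^+ 2.
Proof. by rewrite !hnorm_sqr ipDl !ipDr !raddfD /= (Re_ipC x y); ring. Qed.

Lemma hnorm_sqrB x y : nrm (x - y) ^+ 2 = nrm x ^+ 2 - 2 * Re (ip x y) + nrm y ^+ 2.
Proof. by rewrite hnorm_sqrD hnormN ipNr raddfN mulrN. Qed.

Lemma form_cauchy_schwarz (b : H -> H -> R) :
  (forall x, 0 <= b x x) ->
  (forall x y (t : R), b (x + t%:C%C *: y) (x + t%:C%C *: y)
     = b x x + 2 * t * b x y + t ^+ 2 * b y y) ->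
  forall x y, b x y ^+ 2 <= b x x * b y y.
Proof.
move=> b_ge0 b_expand x y; apply: quadratic_ge0_discriminant => // t.
by rewrite -b_expand.
Qed.

Lemma normr_Re_ip_le x y : `|Re (ip x y)| <= nrm x * nrm y.
Proof.
have CS : Re (ip x y) ^+ 2 <= nrm x ^+ 2 * nrm y ^+ 2.
  rewrite !hnorm_sqr.
  apply: (form_cauchy_schwarz (b := fun u v => Re (ip u v)) Re_ip_self_ge0) => u v t.
  rewrite -!hnorm_sqr hnorm_sqrD hnormZ exprMn real_normK ?num_real // Re_ipZr; ring.
by rewrite -ler_sqr ?nnegrE ?mulr_ge0 ?hnorm_ge0 // exprMn real_normK ?num_real.
Qed.

Lemma Re_ip_le x y : Re (ip x y) <= nrm x * nrm y.
Proof. exact: le_trans (ler_norm _) (normr_Re_ip_le x y). Qed.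

Lemma ler_hnormD x y : nrm (x + y) <= nrm x + nrm y.
Proof.
rewrite -ler_sqr ?nnegrE ?addr_ge0 ?hnorm_ge0 // hnorm_sqrD sqrrD.
have := Re_ip_le x y; lra.
Qed.

Lemma ler_hnormB x y : nrm (x - y) <= nrm x + nrm y.
Proof. by rewrite -(hnormN y) ler_hnormD. Qed.

End InnerProduct.

Section LinearMaps.
Variables (R : realType) (H K : lmodType R[i]) (T : H -> K).
Hypothesis hT : is_linear T.

Lemma linD x y : T (x + y) = T x + T y.
Proof. by have := hT 1 x y; rewrite !scale1r. Qed.

Lemma lin0 : T 0 = 0.
Proof. by apply: (addrI (T 0)); rewrite -linD !addr0. Qed.

Lemma linZ al x : T (al *: x) = al *: T x.
Proof. by have := hT al x 0; rewrite !addr0 lin0 addr0. Qed.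

Lemma linN x : T (- x) = - T x.
Proof. by rewrite -scaleN1r linZ scaleN1r. Qed.

Lemma linB x y : T (x - y) = T x - T y.
Proof. by rewrite linD linN. Qed.

End LinearMaps.

Lemma is_linear_comp (R : realType) (H K L : lmodType R[i]) (F : K -> L) (G : H -> K) :
  is_linear F -> is_linear G -> is_linear (F \o G).
Proof. by move=> F_lin G_lin al x y; rewrite /= G_lin F_lin. Qed.

Lemma is_linear_sub (R : realType) (H K : lmodType R[i]) (F G : H -> K) :
  is_linear F -> is_linear G -> is_linear (fun x => F x - G x).
Proof.
by move=> F_lin G_lin al x y; rewrite F_lin G_lin scalerBr opprD addrACA.
Qed.

Lemma is_linear_shift (R : realType) (H : lmodType R[i]) (T : H -> H) (lam : R[i]) :
  is_linear T -> is_linear (fun x => T x - lam *: x).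
Proof.
move=> T_lin; apply: is_linear_sub => // al x y.
by rewrite scalerDr !scalerA mulrC.
Qed.

Section Spectrum.
Variables (R : realType) (H : lmodType R[i]) (ip : H -> H -> R[i]).
Hypothesis hip : is_inner_product ip.
Local Notation nrm := (hnorm ip).

Lemma invertible_shift_bounded_below (T : H -> H) (lam : R) :
  (exists S : H -> H, [/\ bounded_linear ip ip S,
      forall x, S (T x - lam%:C%C *: x) = x &
      forall y, T (S y) - lam%:C%C *: S y = y]) ->
  exists2 N, 0 < N & forall x, nrm x <= N * nrm (T x - lam%:C%C *: x).
Proof.
move=> [S [[_ [M S_bd]] ST _]]; exists (`|M| + 1) => [|x]; first by rewrite ltr_pwDr.
rewrite -{1}(ST x); apply: (le_trans (S_bd _)); apply: ler_wpM2r; first exact: hnorm_ge0.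
by rewrite (le_trans (ler_norm M)) // lerDl.
Qed.

Lemma not_spectrum_bounded_below (T : H -> H) (lam : R) : ~ real_spectrum ip T lam ->
  exists2 N, 0 < N & forall x, nrm x <= N * nrm (T x - lam%:C%C *: x).
Proof. by move=> /contrapT; apply: invertible_shift_bounded_below. Qed.

Lemma approx_eigenvalue_spectrum (T : H -> H) (lam : R) :
  (forall e, 0 < e -> exists x, nrm (T x - lam%:C%C *: x) < e * nrm x) ->
  real_spectrum ip T lam.
Proof.
move=> approx /invertible_shift_bounded_below[N N_gt0 bd].
have Ninv_gt0 : 0 < N^-1 by rewrite invr_gt0.
have [x x_small] := approx _ Ninv_gt0.
have : N * nrm (T x - lam%:C%C *: x) < N * (N^-1 * nrm x) by rewrite ltr_pM2l.
by rewrite mulrA mulfV ?gt_eqF // mul1r => /(le_lt_trans (bd x)); rewrite ltxx.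
Qed.

End Spectrum.

Section AffineContraction.
Variables (R : realType) (H : lmodType R[i]) (ip : H -> H -> R[i]).
Hypothesis hip : is_inner_product ip.
Hypothesis complete : forall u, h_cauchy ip u -> exists l, h_converges_to ip u l.
Local Notation nrm := (hnorm ip).
Variables (K : H -> H) (q : R) (g : H).
Hypotheses (K_lin : is_linear K) (q_ge0 : 0 <= q) (q_lt1 : q < 1)
  (K_contr : forall x, nrm (K x) <= q * nrm x).

Fixpoint affine_iter n := if n is n'.+1 then g + K (affine_iter n') else 0.

Lemma affine_iter_step n : nrm (affine_iter n.+1 - affine_iter n) <= q ^+ n * nrm g.
Proof.
elim: n => [|n IH]; first by rewrite /= (lin0 K_lin) !addr0 subr0 expr0 mul1r.
rewrite /= opprD addrACA subrr add0r -(linB K_lin) exprS -mulrA.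
exact: le_trans (K_contr _) (ler_wpM2l q_ge0 IH).
Qed.

Lemma affine_iter_dist n m : (n <= m)%N ->
  nrm (affine_iter m - affine_iter n) <= q ^+ n / (1 - q) * nrm g.
Proof.
have q1_gt0 : 0 < 1 - q by rewrite subr_gt0.
have g_ge0 := hnorm_ge0 ip g.
move=> /subnKC <-; set i := (m - n)%N; clearbody i.
suff : nrm (affine_iter (n + i)%N - affine_iter n)
    <= (q ^+ n - q ^+ (n + i)%N) / (1 - q) * nrm g.
  move/le_trans; apply; apply: ler_wpM2r => //.
  apply: ler_wpM2r; first by rewrite invr_ge0 ltW.
  by rewrite lerBlDr lerDl exprn_ge0.
elim: i => [|i IH]; first by rewrite addn0 !subrr (hnorm0 hip) !mul0r.
rewrite addnS -(subrK (affine_iter (n + i)%N) (affine_iter (n + i).+1)) -addrA.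
apply: (le_trans (ler_hnormD hip _ _)); apply: (le_trans (lerD (affine_iter_step _) IH)).
rewrite le_eqVlt; apply/orP; left; apply/eqP.
by rewrite exprS; field; exact: lt0r_neq0 q1_gt0.
Qed.

Lemma affine_iter_cauchy : h_cauchy ip affine_iter.
Proof.
move=> e e_gt0; have q1_gt0 : 0 < 1 - q by rewrite subr_gt0.
have g_ge0 := hnorm_ge0 ip g.
have e'_gt0 : 0 < e * (1 - q) / (nrm g + 1).
  by rewrite mulr_gt0 ?mulr_gt0 ?invr_gt0 ?subr_gt0 // ltr_pwDr.
have q_norm : `|q| < 1 by rewrite ger0_norm.
have [N _ qN_small] :=
  (cvgr0Pnorm_lt (fun n : nat => q ^+ n)).1 (cvg_expr q_norm) _ e'_gt0.
have tail_small k : (N <= k)%N -> q ^+ k / (1 - q) * nrm g < e.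
  move=> /(qN_small k); rewrite ger0_norm ?exprn_ge0 // ltr_pdivlMr ?ltr_pwDr // => qk.
  rewrite mulrAC ltr_pdivrMr //; apply: le_lt_trans qk.
  by rewrite ler_wpM2l ?exprn_ge0 // lerDl.
exists N => m n m_ge n_ge; wlog nm : m n m_ge n_ge / (n <= m)%N.
  move=> le_case; have [nm|/ltnW mn] := leqP n m; first exact: le_case.
  by rewrite (hnorm_distC hip); apply: le_case.
exact: le_lt_trans (affine_iter_dist nm) (tail_small _ n_ge).
Qed.

Lemma affine_contraction_fixpoint : exists l, l = g + K l.
Proof.
have [l conv] := complete affine_iter_cauchy; exists l.
apply/eqP; rewrite -subr_eq0; apply/eqP/(hnorm_eq0 hip)/eqP.
rewrite eq_le hnorm_ge0 andbT; apply/ler_addgt0Pr => e e_gt0; rewrite add0r.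
have e2_gt0 : 0 < e / 2 by rewrite divr_gt0.
have [N close] := conv _ e2_gt0.
have -> : l - (g + K l) = (l - affine_iter N.+1) + K (affine_iter N - l).
  by rewrite (linB K_lin) /= !opprD !addrA subrK.
apply: (le_trans (ler_hnormD hip _ _)); rewrite (hnorm_distC hip l).
have := close N.+1 (leqnSn N); have := close N (leqnn N).
have := K_contr (affine_iter N - l).
have : q * nrm (affine_iter N - l) <= nrm (affine_iter N - l).
  by rewrite ler_piMl ?hnorm_ge0 // ltW.
lra.
Qed.

End AffineContraction.

Section BoundedBelowInverse.
Variables (R : realType) (H : lmodType R[i]) (ip : H -> H -> R[i]).
Hypothesis hip : is_inner_product ip.
Hypothesis complete : forall u, h_cauchy ip u -> exists l, h_converges_to ip u l.
Local Notation nrm := (hnorm ip).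
Variables (T : H -> H) (M k : R).
Hypotheses (T_lin : is_linear T)
  (T_sym : forall x y, Re (ip (T x) y) = Re (ip x (T y)))
  (k_gt0 : 0 < k) (k_le_M : k <= M)
  (T_bd : forall x, nrm (T x) <= M * nrm x)
  (T_below : forall x, k * nrm x <= nrm (T x)).

Let M_gt0 : 0 < M. Proof. exact: lt_le_trans k_le_M. Qed.
Let c := (M ^+ 2)^-1.
Let c_gt0 : 0 < c. Proof. by rewrite invr_gt0 exprn_gt0 ?M_gt0. Qed.

Lemma bounded_below_injective x y : T x = T y -> x = y.
Proof.
move=> Txy; apply/eqP; rewrite -subr_eq0; apply/eqP/(hnorm_eq0 hip).
apply/eqP; rewrite eq_le hnorm_ge0 andbT -(pmulr_rle0 _ k_gt0).
by have := T_below (x - y); rewrite (linB T_lin) Txy subrr (hnorm0 hip).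
Qed.

Lemma sqr_bounded_below_contraction x :
  nrm (x - c%:C%C *: T (T x)) ^+ 2 <= (1 - c * k ^+ 2) * nrm x ^+ 2.
Proof.
rewrite (hnorm_sqrB hip) (Re_ipZr hip) (hnormZ hip) (ger0_norm (ltW c_gt0)) -T_sym.
rewrite -(hnorm_sqr hip).
have TT_le : (c * nrm (T (T x))) ^+ 2 <= c * nrm (T x) ^+ 2.
  rewrite exprMn expr2 -mulrA ler_pM2l // mulrC ler_pdivrMr ?exprn_gt0 ?M_gt0 //.
  by rewrite -exprMn ler_sqr ?nnegrE ?mulr_ge0 ?hnorm_ge0 ?(ltW M_gt0) // mulrC.
have T_ge : c * (k ^+ 2 * nrm x ^+ 2) <= c * nrm (T x) ^+ 2.
  by rewrite ler_pM2l // -exprMn ler_sqr ?nnegrE ?mulr_ge0 ?hnorm_ge0 ?(ltW k_gt0).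
lra.
Qed.

(* [x - M^-2 T (T x)] is a contraction, so the Neumann iteration solves
   [T (T y) = f]. *)
Lemma bounded_below_surjective f : exists y, T y = f.
Proof.
pose K x := x - c%:C%C *: T (T x).
have K_lin : is_linear K.
  apply: is_linear_sub => [al x y //|al x y].
  by rewrite !T_lin scalerDr !scalerA mulrC.
pose q := Num.sqrt (1 - c * k ^+ 2).
have ck_le1 : c * k ^+ 2 <= 1.
  rewrite mulrC ler_pdivrMr ?exprn_gt0 ?M_gt0 // mul1r.
  by rewrite ler_sqr ?nnegrE ?(ltW k_gt0) ?(ltW M_gt0).
have q_lt1 : q < 1 by rewrite -sqrtr1 ltr_sqrt ?ltrBlDr ?ltrDl ?mulr_gt0 ?exprn_gt0.
have K_contr x : nrm (K x) <= q * nrm x.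
  rewrite -ler_sqr ?nnegrE ?mulr_ge0 ?sqrtr_ge0 ?hnorm_ge0 //.
  by rewrite exprMn [q ^+ 2]sqr_sqrtr ?subr_ge0 //; exact: sqr_bounded_below_contraction.
have [l fix_l] := affine_contraction_fixpoint hip complete (c%:C%C *: f) K_lin
  (sqrtr_ge0 _) q_lt1 K_contr.
exists (T l); apply: (scalerI (a := c%:C%C)); first by rewrite eq_complex /= gt_eqF.
move: fix_l; rewrite /K addrCA -{1}[l]addr0 => /addrI /eqP.
by rewrite eq_sym subr_eq0 => /eqP.
Qed.

Lemma bounded_below_invertible : exists S : H -> H,
  [/\ bounded_linear ip ip S, forall x, S (T x) = x & forall y, T (S y) = y].
Proof.
pose S f := projT1 (cid (bounded_below_surjective f)).
have TS f : T (S f) = f := projT2 (cid (bounded_below_surjective f)).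
exists S; split=> [||//]; last by move=> x; apply: bounded_below_injective; rewrite TS.
split=> [al x y|]; first by apply: bounded_below_injective; rewrite TS T_lin !TS.
exists k^-1 => x; rewrite mulrC ler_pdivlMr // mulrC -{2}(TS x).
exact: T_below.
Qed.

End BoundedBelowInverse.

Lemma shift_comp (R : realType) (H : lmodType R[i]) (T : H -> H) (a b : R[i]) x :
  is_linear T ->
  T (T x - a *: x) - b *: (T x - a *: x) = T (T x) - (a + b) *: T x + (a * b) *: x.
Proof.
move=> T_lin; rewrite (linB T_lin) (linZ T_lin) scalerBr scalerA scalerDl.
by rewrite opprB opprD !addrA addrAC mulrC.
Qed.

Section RayleighQuotient.
Variables (R : realType) (H : lmodType R[i]) (ip : H -> H -> R[i]).
Hypothesis hip : is_inner_product ip.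
Local Notation nrm := (hnorm ip).

Lemma exists_inf_ratio (F : H -> R) (w : H) : w <> 0 -> (forall x, 0 <= F x) ->
  exists2 m, 0 <= m & (forall x, m * nrm x ^+ 2 <= F x) /\
    (forall e, 0 < e -> exists2 x, x <> 0 & F x < (m + e) * nrm x ^+ 2).
Proof.
move=> w_neq0 F_ge0.
pose Q := [set F x / nrm x ^+ 2 | x in [set x | x <> 0]].
have Q_ge0 : lbound Q 0 by move=> _ [x _ <-]; rewrite divr_ge0 ?sqr_ge0.
have Q_ne : Q !=set0 by exists (F w / nrm w ^+ 2); exists w.
exists (inf Q); first exact: lb_le_inf Q_ne Q_ge0.
have Q_inf : has_inf Q by split; last exists 0.
split=> [x|e e_gt0].
  have [->|x_neq0] := eqVneq x 0; first by rewrite (hnorm0 hip) expr0n /= mulr0.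
  have nx_gt0 : 0 < nrm x ^+ 2 by rewrite exprn_gt0 // (hnorm_gt0 hip) //; apply/eqP.
  by rewrite -ler_pdivlMr //; apply: ge_inf Q_inf.2 _ _; exists x => //; apply/eqP.
have [_ [x x_neq0 <-] Fx_lt] := inf_adherent e_gt0 Q_inf.
exists x => //; have nx_gt0 : 0 < nrm x ^+ 2 by rewrite exprn_gt0 // hnorm_gt0.
by rewrite -ltr_pdivrMr.
Qed.

(* [P = B^2 - m] is a nonnegative operator of norm at most [L^2]; for such
   an operator [|P x|^2 <= |P| <P x, x>], by Cauchy-Schwarz for [<P _, _>]. *)
Lemma hnorm_sqr_posop_le (B : H -> H) (L m : R) : is_linear B ->
  (forall x y, Re (ip (B x) y) = Re (ip x (B y))) ->
  (forall x, nrm (B x) <= L * nrm x) -> 0 <= m ->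
  (forall x, m * nrm x ^+ 2 <= nrm (B x) ^+ 2) ->
  forall x, nrm (B (B x) - m%:C%C *: x) ^+ 2
            <= L ^+ 2 * (nrm (B x) ^+ 2 - m * nrm x ^+ 2).
Proof.
move=> B_lin B_sym B_bd m_ge0 m_below x.
pose b y z := Re (ip (B y) (B z)) - m * Re (ip y z).
have b_ge0 y : 0 <= b y y by rewrite /b -!(hnorm_sqr hip) subr_ge0.
have b_expand y z (t : R) : b (y + t%:C%C *: z) (y + t%:C%C *: z)
    = b y y + 2 * t * b y z + t ^+ 2 * b z z.
  rewrite /b (linD B_lin) (linZ B_lin) !(ipDl hip) !(ipDr hip) !raddfD /=.
  rewrite !(Re_ipZl hip) !(Re_ipZr hip) (Re_ipC hip (B z) (B y)) (Re_ipC hip z y); ring.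
pose P y := B (B y) - m%:C%C *: y.
have P_form y z : Re (ip (P y) z) = b y z.
  by rewrite /P /b (ipBl hip) raddfB /= (Re_ipZl hip) B_sym.
have bPP : b (P x) (P x) <= L ^+ 2 * nrm (P x) ^+ 2.
  have BP_le : nrm (B (P x)) ^+ 2 <= L ^+ 2 * nrm (P x) ^+ 2.
    by rewrite -exprMn ler_sqr ?nnegrE ?hnorm_ge0 ?(le_trans (hnorm_ge0 _ _) (B_bd _)).
  have := mulr_ge0 m_ge0 (sqr_ge0 (nrm (P x))).
  by rewrite /b -!(hnorm_sqr hip); lra.
have := form_cauchy_schwarz b_ge0 b_expand x (P x).
rewrite -P_form -(hnorm_sqr hip) /b -!(hnorm_sqr hip) -/(P x).
set p := nrm (P x) ^+ 2; have [->|p_neq0] := eqVneq p 0.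
  by rewrite mulr_ge0 ?sqr_ge0 ?subr_ge0.
have p_gt0 : 0 < p by rewrite lt_def p_neq0 sqr_ge0.
move: bPP; rewrite /b -!(hnorm_sqr hip) -/p => bPP CS.
rewrite -(ler_pM2r p_gt0) -expr2; apply: (le_trans CS).
by rewrite [L ^+ 2 * _]mulrC -mulrA ler_wpM2l // subr_ge0.
Qed.

End RayleighQuotient.

Section SymmetricContraction.
Variables (R : realType) (H : lmodType R[i]) (ip : H -> H -> R[i]).
Hypothesis hip : is_inner_product ip.
Local Notation nrm := (hnorm ip).
Variable T : H -> H.
Hypotheses (T_lin : is_linear T)
  (T_sym : forall x y, Re (ip (T x) y) = Re (ip x (T y)))
  (T_contr : forall x, nrm (T x) <= nrm x).

Lemma shift_sym (lam : R) x y :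
  Re (ip (T x - lam%:C%C *: x) y) = Re (ip x (T y - lam%:C%C *: y)).
Proof. by rewrite (ipBl hip) (ipBr hip) !raddfB /= (Re_ipZl hip) (Re_ipZr hip) T_sym. Qed.

Lemma hnorm_shift_le (lam : R) x : nrm (T x - lam%:C%C *: x) <= (1 + `|lam|) * nrm x.
Proof.
by apply: (le_trans (ler_hnormB hip _ _)); rewrite (hnormZ hip) mulrDl mul1r lerD2r.
Qed.

Lemma spectrum_approx_eigenvector (lam : R) :
  (forall u, h_cauchy ip u -> exists l, h_converges_to ip u l) ->
  real_spectrum ip T lam ->
  forall e, 0 < e -> exists u, nrm u = 1 /\ nrm (T u - lam%:C%C *: u) < e.
Proof.
move=> complete lam_spec e e_gt0; apply: contrapT => no_approx; apply: lam_spec.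
pose k := Order.min e 1.
have k_gt0 : 0 < k by rewrite lt_min e_gt0 ltr01.
have k_le : k <= 1 + `|lam| by rewrite ge_min lerDl normr_ge0 orbT.
have below x : k * nrm x <= nrm (T x - lam%:C%C *: x).
  have [->|/eqP x_neq0] := eqVneq x 0.
    by rewrite (hnorm0 hip) mulr0 hnorm_ge0.
  have nx_gt0 := hnorm_gt0 hip x_neq0.
  pose u := (nrm x)^-1%:C%C *: x.
  have : e <= nrm (T u - lam%:C%C *: u).
    rewrite leNgt; apply/negP => small; apply: no_approx.
    by exists u; split => //; exact: hnorm_normalized.
  rewrite /u (linZ (is_linear_shift _ T_lin)) (hnormZ hip).
  rewrite ger0_norm ?invr_ge0 ?(ltW nx_gt0) //.
  rewrite ler_pdivlMl // => e_le.
  by apply: le_trans e_le; rewrite mulrC ler_wpM2l ?hnorm_ge0 // ge_min lexx.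
have [S [S_bd ST TS]] := bounded_below_invertible hip complete
  (is_linear_shift _ T_lin) (shift_sym lam) k_gt0 k_le (hnorm_shift_le lam) below.
by exists S.
Qed.

(* [(T - (lam + s)) (T - (lam - s)) = (T - lam)^2 - m] is small on the
   near-minimisers [x], while [T - (lam - s)] is bounded below. *)
Lemma spectrum_add_sqrt_inf (lam m : R) : 0 <= m ->
  (forall x, m * nrm x ^+ 2 <= nrm (T x - lam%:C%C *: x) ^+ 2) ->
  (forall e, 0 < e -> exists2 x, x <> 0 &
     nrm (T x - lam%:C%C *: x) ^+ 2 < (m + e) * nrm x ^+ 2) ->
  ~ real_spectrum ip T (lam - Num.sqrt m) -> real_spectrum ip T (lam + Num.sqrt m).
Proof.
move=> m_ge0 m_below m_inf /not_spectrum_bounded_below[N N_gt0 N_bd].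
pose B x := T x - lam%:C%C *: x; have B_lin : is_linear B by apply: is_linear_shift.
apply: approx_eigenvalue_spectrum => e e_gt0.
pose L := 1 + `|lam|; have L_gt0 : 0 < L by rewrite ltr_pwDl.
pose d := (e / (L * N)) ^+ 2.
have d_gt0 : 0 < d by rewrite exprn_gt0 // divr_gt0 // mulr_gt0.
have [x x_neq0 Bx_small] := m_inf d d_gt0.
set s := Num.sqrt m in N_bd *; pose y := T x - (lam - s)%:C%C *: x.
have Ty : T y - (lam + s)%:C%C *: y = B (B x) - m%:C%C *: x.
  rewrite /y /B !(shift_comp _ _ _ T_lin) -[in RHS]addrA -scalerBl.
  rewrite -[m](sqr_sqrtr m_ge0) -/s; congr (_ - _ *: _ + _ *: _);
  by apply/eqP; rewrite eq_complex /=; apply/andP; split; apply/eqP; ring.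
exists y; rewrite Ty.
have defect_le := hnorm_sqr_posop_le hip B_lin (shift_sym lam) (hnorm_shift_le lam)
  m_ge0 m_below x.
have defect_small : nrm (B x) ^+ 2 - m * nrm x ^+ 2 < d * (N * nrm y) ^+ 2.
  apply: (@lt_le_trans _ _ (d * nrm x ^+ 2)).
    by move: Bx_small; rewrite mulrDl; lra.
  rewrite ler_pM2l // ler_sqr ?nnegrE ?mulr_ge0 ?hnorm_ge0 ?(ltW N_gt0) //.
  exact: N_bd.
rewrite -(ltr_pM2l (exprn_gt0 2 L_gt0)) in defect_small.
rewrite -ltr_sqr ?nnegrE ?hnorm_ge0 ?mulr_ge0 ?hnorm_ge0 ?(ltW e_gt0) //.
apply: le_lt_trans defect_le (lt_le_trans defect_small _).
by rewrite le_eqVlt; apply/orP; left; apply/eqP; rewrite /d; field; rewrite !gt_eqF.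
Qed.

Lemma exists_spectrum_near (lam rho : R) (w : H) : w <> 0 ->
  nrm (T w - lam%:C%C *: w) <= rho * nrm w ->
  exists2 mu, real_spectrum ip T mu & `|lam - mu| <= rho.
Proof.
move=> w_neq0 w_approx; have nw_gt0 := hnorm_gt0 hip w_neq0.
have [m m_ge0 [m_below m_inf]] := exists_inf_ratio hip
  (F := fun x => nrm (T x - lam%:C%C *: x) ^+ 2) w_neq0 (fun x => sqr_ge0 _).
pose s := Num.sqrt m; have s_ge0 : 0 <= s := sqrtr_ge0 m.
have s_le : s <= rho.
  have rho_ge0 : 0 <= rho.
    by rewrite -(pmulr_lge0 _ nw_gt0) (le_trans (hnorm_ge0 _ _) w_approx).
  rewrite -ler_sqr ?nnegrE // sqr_sqrtr // -(ler_pM2r (exprn_gt0 2 nw_gt0)).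
  apply: le_trans (m_below w) _; rewrite -exprMn ler_sqr ?nnegrE //.
    exact: hnorm_ge0.
  by rewrite mulr_ge0 ?hnorm_ge0.
have [lo_spec|lo_not_spec] := pselect (real_spectrum ip T (lam - s)).
  by exists (lam - s); rewrite // opprB addrC subrK ger0_norm.
exists (lam + s); first exact: spectrum_add_sqrt_inf.
by rewrite opprD addrA subrr add0r normrN ger0_norm.
Qed.

End SymmetricContraction.

Section Resolvent.
Variables (R : realType) (H : lmodType R[i]) (ip : H -> H -> R[i]).
Hypothesis hip : is_inner_product ip.
Local Notation nrm := (hnorm ip).
Variables (D : set H) (a : H -> H -> R[i]) (DA : set H) (A : H -> H) (Rs : H -> H).
Hypotheses (ha : closed_dd_nonneg_form ip D a) (hA : associated_operator ip D a DA A)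
  (hRs : is_resolvent DA A Rs).

(* Polarization, using that [a] is real on the diagonal. *)
Lemma form_hermitian u v : D u -> D v -> a u v = ((a v u)^*)%C.
Proof.
case: ha => [[_ D_comb] ses a_ge0 _ _] Du Dv.
have Im_diag w : D w -> Im (a w w) = 0 by move=> Dw; exact/ger0_Im/a_ge0.
have expand al : a (al *: u + v) (al *: u + v)
    = al * (al^*)%C * a u u + al * a u v + ((al^*)%C * a v u + a v v).
  have [-> _] := ses al u v (al *: u + v) Du Dv (D_comb al u v Du Dv).
  have [_ ->] := ses al u v u Du Dv Du; have [_ ->] := ses al u v v Du Dv Dv.
  by rewrite mulrDr mulrA.
have := Im_diag _ (D_comb 1 u v Du Dv); have := Im_diag _ (D_comb 'i%C u v Du Dv).
rewrite !expand; move: (Im_diag u Du) (Im_diag v Dv).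
case: (a u u) (a v v) (a u v) (a v u) => [? ?] [? ?] [? ?] [? ?] /= -> -> Im_i Im_1.
by apply/eqP; rewrite eq_complex /=; apply/andP; split; apply/eqP; lra.
Qed.

Lemma resolvent_DA f : DA (Rs f).
Proof. by case: hRs => /(_ f) []. Qed.

Lemma resolvent_D f : D (Rs f).
Proof. by case: hA => /(_ (Rs f)) [/(_ (resolvent_DA f)) []]. Qed.

Lemma resolvent_eq f : A (Rs f) + Rs f = f.
Proof. by case: hRs => /(_ f) []. Qed.

Lemma form_resolvent_ip f v : D v -> a (Rs f) v = ip (f - Rs f) v.
Proof.
case: hA => _ a_ip Dv; rewrite (a_ip _ _ (resolvent_DA f) Dv).
by rewrite -{2}(resolvent_eq f) addrK.
Qed.

Lemma resolvent_sym f g : ip (Rs f) g = ip f (Rs g).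
Proof.
have form_sym : ip (f - Rs f) (Rs g) = ip (Rs f) (g - Rs g).
  rewrite -(form_resolvent_ip f (resolvent_D g)).
  rewrite (form_hermitian (resolvent_D f) (resolvent_D g)).
  by rewrite (form_resolvent_ip g (resolvent_D f)) -(ip_conj hip).
by move: form_sym; rewrite (ipBl hip) (ipBr hip) => /addIr.
Qed.

Lemma Re_resolvent_sym f g : Re (ip (Rs f) g) = Re (ip f (Rs g)).
Proof. by rewrite resolvent_sym. Qed.

Lemma resolvent_linear : is_linear Rs.
Proof.
move=> al x y; apply/eqP; rewrite -subr_eq0; apply/eqP; case: hip => _ _ _; apply.
rewrite {1}(ipBl hip) (ipDl hip) (ipZl hip) !resolvent_sym (ipDl hip) (ipZl hip).
by rewrite subrr.
Qed.

Lemma Re_form_resolvent f : Re (a (Rs f) (Rs f)) = Re (ip f (Rs f)) - nrm (Rs f) ^+ 2.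
Proof.
by rewrite (form_resolvent_ip f (resolvent_D f)) (ipBl hip) raddfB (hnorm_sqr hip).
Qed.

Lemma resolvent_contraction f : nrm (Rs f) <= nrm f.
Proof.
have form_ge0 : 0 <= Re (a (Rs f) (Rs f)).
  by case: ha => _ _ /(_ _ (resolvent_D f)); rewrite lecE => /andP[].
rewrite Re_form_resolvent subr_ge0 in form_ge0.
have [Rf_eq0|Rf_neq0] := eqVneq (nrm (Rs f)) 0; first by rewrite Rf_eq0 hnorm_ge0.
have Rf_gt0 : 0 < nrm (Rs f) by rewrite lt_def Rf_neq0 hnorm_ge0.
rewrite -(ler_pM2r Rf_gt0) -expr2; exact: le_trans form_ge0 (Re_ip_le hip _ _).
Qed.

End Resolvent.

Section SpectralComparison.
Variables (R : realType) (X Y : lmodType R[i]).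
Variables (ipX : X -> X -> R[i]) (ipY : Y -> Y -> R[i]).
Hypotheses (hipX : is_inner_product ipX) (hipY : is_inner_product ipY).
Hypothesis completeX : forall u, h_cauchy ipX u -> exists l, h_converges_to ipX u l.
Local Notation nX := (hnorm ipX).
Local Notation nY := (hnorm ipY).
Variables (RX : X -> X) (RY : Y -> Y) (DX : set X) (aX : X -> X -> R[i]) (J : X -> Y).
Hypotheses (RX_lin : is_linear RX)
  (RX_sym : forall x y, Re (ipX (RX x) y) = Re (ipX x (RX y)))
  (RX_contr : forall x, nX (RX x) <= nX x)
  (RX_D : forall f, DX (RX f))
  (RX_form : forall f, Re (aX (RX f) (RX f)) = Re (ipX f (RX f)) - nX (RX f) ^+ 2).
Hypotheses (RY_lin : is_linear RY)
  (RY_sym : forall x y, Re (ipY (RY x) y) = Re (ipY x (RY y)))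
  (RY_contr : forall x, nY (RY x) <= nY x).
Variables (MJ delta nu d : R).
Hypotheses (J_lin : is_linear J) (MJ_ge0 : 0 <= MJ)
  (J_bd : forall x, nY (J x) <= MJ * nX x)
  (delta_ge0 : 0 <= delta) (nu_ge0 : 0 <= nu) (d_gt0 : 0 < d) (d_lt1 : d < 1)
  (nu_lt : nu < d / (1 - d))
  (J_intertwine : forall u, nY (J (RX u) - RY (J u)) <= delta * nX u)
  (J_coercive : forall u, DX u -> nX u ^+ 2 <= nY (J u) ^+ 2 + nu * Re (aX u u)).

Let kappa := 1 - nu * (d^-1 - 1).

Lemma kappa_gt0 : 0 < kappa.
Proof.
rewrite /kappa; have -> : d^-1 - 1 = (1 - d) / d by field; rewrite gt_eqF.
by rewrite subr_gt0 mulrA ltr_pdivrMr // mul1r -ltr_pdivlMr // subr_gt0.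
Qed.

Lemma kappa_le lam : d <= lam -> lam ^+ 2 * kappa <= lam ^+ 2 - nu * (lam - lam ^+ 2).
Proof.
move=> d_le; have lam_gt0 := lt_le_trans d_gt0 d_le.
rewrite /kappa mulrBr mulr1 lerD2l lerN2 mulrCA; apply: ler_wpM2l => //.
by rewrite mulrBr mulr1 lerD2r ler_pdivlMr // expr2 ler_pM2l.
Qed.

(* Here [J_coercive] is applied to [RX u]; the form value there is close to
   [lam - lam^2] because [RX] is the resolvent. *)
Lemma transplant_norm_ge (lam eta : R) (u : X) : d <= lam -> lam <= 1 ->
  nX u = 1 -> nX (RX u - lam%:C%C *: u) <= eta ->
  lam ^+ 2 * kappa - eta * (2 + nu) <= nY (J (RX u)) ^+ 2.
Proof.
move=> d_le lam_le1 u1 err_le; have lam_gt0 := lt_le_trans d_gt0 d_le.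
set e := RX u - lam%:C%C *: u.
have RXu : RX u = lam%:C%C *: u + e by rewrite /e addrC subrK.
set p := Re (ipX u e).
have p_small c : `|c| <= 1 -> - eta <= c * p <= eta.
  move=> c_le1; rewrite -ler_norml normrM -[eta]mul1r ler_pM ?normr_ge0 //.
  by apply: le_trans (normr_Re_ip_le hipX u e) _; rewrite u1 mul1r.
have /andP[lamp_lb _] : - eta <= lam * p <= eta by apply: p_small; rewrite ler_norml; lra.
have /andP[lamp2_lb _] : - eta <= (2 * lam - 1) * p <= eta.
  by apply: p_small; rewrite ler_norml; lra.
have nup_lb : - (nu * eta) <= nu * ((2 * lam - 1) * p) by rewrite -mulrN ler_wpM2l.
have RXu_sqr : nX (RX u) ^+ 2 = lam ^+ 2 + 2 * lam * p + nX e ^+ 2.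
  rewrite RXu (hnorm_sqrD hipX) (hnormZ hipX) u1 mulr1 (Re_ipZl hipX).
  by rewrite real_normK ?num_real // mulrA.
have ip_u_RXu : Re (ipX u (RX u)) = lam + p.
  by rewrite RXu (ipDr hipX) raddfD /= (Re_ipZr hipX) -(hnorm_sqr hipX) u1 expr1n mulr1.
have := J_coercive (RX_D u); rewrite RX_form ip_u_RXu RXu_sqr.
have := kappa_le d_le; have := mulr_ge0 nu_ge0 (sqr_ge0 (nX e)).
have := sqr_ge0 (nX e); lra.
Qed.

Lemma transplant_defect_le (lam eta : R) (u : X) : 0 <= lam ->
  nX u = 1 -> nX (RX u - lam%:C%C *: u) <= eta ->
  nY (RY (J (RX u)) - lam%:C%C *: J (RX u)) <= delta * lam + eta * (delta + MJ).
Proof.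
move=> lam_ge0 u1 err_le.
have -> : RY (J (RX u)) - lam%:C%C *: J (RX u)
    = J (RX (RX u - lam%:C%C *: u)) - (J (RX (RX u)) - RY (J (RX u))).
  rewrite (linB RX_lin) (linZ RX_lin) (linB J_lin) (linZ J_lin).
  by rewrite opprB [RHS]addrC addrA subrK.
apply: (le_trans (ler_hnormB hipY _ _)).
have RXu_le : nX (RX u) <= lam + eta.
  rewrite -(subrK (lam%:C%C *: u) (RX u)); apply: (le_trans (ler_hnormD hipX _ _)).
  by rewrite (hnormZ hipX) u1 mulr1 ger0_norm // addrC lerD2l.
have J_err : nY (J (RX (RX u - lam%:C%C *: u))) <= MJ * eta.
  by apply: (le_trans (J_bd _)); rewrite ler_wpM2l // (le_trans (RX_contr _)).
have := J_intertwine (RX u); have := ler_wpM2l delta_ge0 RXu_le.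
lra.
Qed.

Lemma spectrum_transfer (lam eta : R) : real_spectrum ipX RX lam ->
  d <= lam -> lam <= 1 -> 0 < eta -> 0 < lam ^+ 2 * kappa - eta * (2 + nu) ->
  exists2 mu, real_spectrum ipY RY mu &
    `|lam - mu| ^+ 2 * (lam ^+ 2 * kappa - eta * (2 + nu))
      <= (delta * lam + eta * (delta + MJ)) ^+ 2.
Proof.
move=> lam_spec d_le lam_le1 eta_gt0 gap_gt0.
have lam_ge0 : 0 <= lam := ltW (lt_le_trans d_gt0 d_le).
have [u [u1 u_err]] :=
  spectrum_approx_eigenvector hipX RX_lin RX_sym RX_contr completeX lam_spec eta_gt0.
have w_ge := transplant_norm_ge d_le lam_le1 u1 (ltW u_err).
have w_neq0 : J (RX u) <> 0.
  by move=> w0; move: (lt_le_trans gap_gt0 w_ge); rewrite w0 (hnorm0 hipY) expr0n ltxx.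
have w_gt0 := hnorm_gt0 hipY w_neq0.
set c := delta * lam + eta * (delta + MJ).
have c_ge0 : 0 <= c by rewrite addr_ge0 ?mulr_ge0 ?addr_ge0 // ltW.
have w_approx : nY (RY (J (RX u)) - lam%:C%C *: J (RX u))
    <= c / nY (J (RX u)) * nY (J (RX u)).
  by rewrite divfK ?gt_eqF // transplant_defect_le // ltW.
have [mu mu_spec mu_near] :=
  exists_spectrum_near hipY RY_lin RY_sym RY_contr w_neq0 w_approx.
exists mu => //; apply: (le_trans (ler_wpM2l (sqr_ge0 _) w_ge)).
rewrite -exprMn ler_sqr ?nnegrE ?mulr_ge0 ?hnorm_ge0 //.
by rewrite -ler_pdivlMr.
Qed.

(* Let the approximation error [eta] of [spectrum_transfer] tend to [0]. *)
Lemma lbound_spectrum_dist_le (lam r : R) : real_spectrum ipX RX lam ->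
  d <= lam -> lam <= 1 -> 0 <= r ->
  (forall mu, real_spectrum ipY RY mu -> r <= `|lam - mu|) ->
  r <= delta / Num.sqrt kappa.
Proof.
move=> lam_spec d_le lam_le1 r_ge0 r_lb; have lam_gt0 := lt_le_trans d_gt0 d_le.
pose a0 := lam ^+ 2 * kappa; pose C1 := 2 + nu; pose C2 := delta + MJ.
have a0_gt0 : 0 < a0 by rewrite mulr_gt0 ?exprn_gt0 ?kappa_gt0.
have C1_gt0 : 0 < C1 by rewrite ltr_pwDl.
pose e0 := Order.min 1 (a0 / (2 * C1)).
have e0_gt0 : 0 < e0 by rewrite lt_min ltr01 divr_gt0 // mulr_gt0.
have gap_gt0 eta : 0 < eta -> eta <= e0 -> 0 < a0 - eta * C1.
  move=> eta_gt0 eta_le; have : eta <= a0 / (2 * C1).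
    by apply: le_trans eta_le _; rewrite ge_min lexx orbT.
  by rewrite ler_pdivlMr ?mulr_gt0 //; lra.
have sqr_le : r ^+ 2 * a0 - delta ^+ 2 * lam ^+ 2 <= 0.
  apply: (le0_small_multiples (K := r ^+ 2 * C1 + 2 * delta * lam * C2 + C2 ^+ 2) e0_gt0).
  move=> eta eta_gt0 eta_le; have gap := gap_gt0 _ eta_gt0 eta_le.
  have [mu mu_spec mu_near] := spectrum_transfer lam_spec d_le lam_le1 eta_gt0 gap.
  have r_sqr : r ^+ 2 * (a0 - eta * C1) <= (delta * lam + eta * C2) ^+ 2.
    apply: le_trans mu_near; apply: ler_wpM2r; first exact: ltW.
    by rewrite ler_sqr ?nnegrE // r_lb.
  have eta_le1 : eta <= 1 by apply: le_trans eta_le _; rewrite ge_min lexx.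
  have : eta * eta * C2 ^+ 2 <= eta * C2 ^+ 2.
    by rewrite -mulrA ler_piMl // mulr_ge0 ?sqr_ge0 // ltW.
  by move: r_sqr; rewrite sqrrD !exprMn; nra.
have r_sqr_le : r ^+ 2 * kappa <= delta ^+ 2.
  by rewrite -(ler_pM2r (exprn_gt0 2 lam_gt0)); move: sqr_le; rewrite /a0; lra.
rewrite -ler_sqr ?nnegrE ?divr_ge0 ?sqrtr_ge0 //.
rewrite exprMn exprVn sqr_sqrtr ?(ltW kappa_gt0) //.
by rewrite ler_pdivlMr ?kappa_gt0.
Qed.

Lemma inf_dist_spectrum_le lam : real_spectrum ipX RX lam -> d <= lam -> lam <= 1 ->
  (ereal_inf [set (`|lam - mu|)%:E | mu in real_spectrum ipY RY]
     <= (delta / Num.sqrt kappa)%:E)%E.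
Proof.
move=> lam_spec d_le lam_le1; set S := [set _ | _ in _].
have a0_gt0 : 0 < lam ^+ 2 * kappa.
  by rewrite mulr_gt0 ?exprn_gt0 ?kappa_gt0 ?(lt_le_trans d_gt0).
pose eta := lam ^+ 2 * kappa / (2 * (2 + nu)).
have C1_gt0 : 0 < 2 + nu by rewrite ltr_pwDl.
have eta_gt0 : 0 < eta by rewrite divr_gt0 // mulr_gt0.
have gap : 0 < lam ^+ 2 * kappa - eta * (2 + nu).
  by rewrite /eta invfM mulrA mulfVK ?gt_eqF //; lra.
have [mu0 mu0_spec _] := spectrum_transfer lam_spec d_le lam_le1 eta_gt0 gap.
have S_le : (ereal_inf S <= (`|lam - mu0|)%:E)%E by apply: ereal_inf_lbound; exists mu0.
have S_ge0 : (0 <= ereal_inf S)%E.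
  by apply: le_ereal_inf_tmp => _ [mu _ <-]; rewrite lee_fin.
case E : (ereal_inf S) S_le S_ge0 => [r| |] //= _; rewrite !lee_fin => r_ge0.
apply: lbound_spectrum_dist_le lam_spec d_le lam_le1 r_ge0 _ => mu mu_spec.
by rewrite -lee_fin -E; apply: ereal_inf_lbound; exists mu.
Qed.

Lemma dist_out_spectrum_le :
  (dist_out (real_spectrum ipX RX `&` [set x : R | (d <= x <= 1)%R])
            (real_spectrum ipY RY) <= (delta / Num.sqrt kappa)%:E)%E.
Proof.
rewrite /dist_out ge_max lee_fin divr_ge0 ?sqrtr_ge0 //=.
apply: ge_ereal_sup => _ [lam [lam_spec /andP[d_le lam_le1]] <-].
exact: inf_dist_spectrum_le.
Qed.

End SpectralComparison.

Section OperatorNorm.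
Variables (R : realType) (X Y : lmodType R[i]).
Variables (ipX : X -> X -> R[i]) (ipY : Y -> Y -> R[i]).
Hypotheses (hipX : is_inner_product ipX) (hipY : is_inner_product ipY).
Local Notation nX := (hnorm ipX).
Local Notation nY := (hnorm ipY).

Lemma bounded_linear_bound (T : X -> Y) : bounded_linear ipX ipY T ->
  exists2 M, 0 <= M & forall x, nY (T x) <= M * nX x.
Proof.
case=> _ [M T_bd]; exists `|M| => // x.
exact: le_trans (T_bd x) (ler_wpM2r (hnorm_ge0 _ _) (ler_norm M)).
Qed.

Lemma hnorm_le_opnorm (T : X -> Y) (M : R) : is_linear T ->
  (forall x, nY (T x) <= M * nX x) -> forall x, nY (T x) <= opnorm ipX ipY T * nX x.
Proof.
move=> T_lin T_bd x; have [->|/eqP x_neq0] := eqVneq x 0.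
  by rewrite (lin0 T_lin) !(hnorm0 _) ?mulr0.
have nx_gt0 := hnorm_gt0 hipX x_neq0.
pose u := (nX x)^-1%:C%C *: x; have u1 : nX u = 1 := hnorm_normalized hipX x_neq0.
have ball_u : [set y | nX y <= 1] u by rewrite /= u1.
have bounded : has_sup [set nY (T y) | y in [set y | nX y <= 1]].
  split; first by exists (nY (T u)); exists u.
  exists `|M| => _ [y y_le1 <-]; apply: (le_trans (T_bd y)).
  apply: le_trans (ler_wpM2r (hnorm_ge0 _ _) (ler_norm M)) _.
  by rewrite -{2}(mulr1 `|M|) ler_wpM2l.
have := sup_upper_bound bounded (ex_intro2 _ _ u ball_u erefl).
rewrite /u (linZ T_lin) (hnormZ hipY) ger0_norm ?invr_ge0 ?(ltW nx_gt0) // => Tu_le.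
by rewrite mulrC -ler_pdivrMl.
Qed.

Lemma opnorm_distC (F G : X -> Y) :
  opnorm ipX ipY (fun x => F x - G x) = opnorm ipX ipY (fun x => G x - F x).
Proof.
by rewrite /opnorm; congr sup; congr image; apply/funext => x; rewrite (hnorm_distC hipY).
Qed.

End OperatorNorm.

Section ResolventComparison.
Variables (R : realType) (X Y : lmodType R[i]).
Variables (ipX : X -> X -> R[i]) (ipY : Y -> Y -> R[i]).
Hypotheses (hipX : is_inner_product ipX) (hipY : is_inner_product ipY).
Hypothesis completeX : forall u, h_cauchy ipX u -> exists l, h_converges_to ipX u l.
Variables (DX : set X) (aX : X -> X -> R[i]) (DAX : set X) (AX RX : X -> X).
Variables (DY : set Y) (aY : Y -> Y -> R[i]) (DAY : set Y) (AY RY : Y -> Y).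
Variables (J : X -> Y) (delta nu d : R).
Hypotheses (haX : closed_dd_nonneg_form ipX DX aX)
  (hAX : associated_operator ipX DX aX DAX AX) (hRX : is_resolvent DAX AX RX).
Hypotheses (haY : closed_dd_nonneg_form ipY DY aY)
  (hAY : associated_operator ipY DY aY DAY AY) (hRY : is_resolvent DAY AY RY).
Hypotheses (hJ : bounded_linear ipX ipY J)
  (delta_ge0 : 0 <= delta) (nu_ge0 : 0 <= nu) (d_gt0 : 0 < d) (d_lt1 : d < 1)
  (nu_lt : nu < d / (1 - d))
  (defect_le : opnorm ipX ipY (fun u => J (RX u) - RY (J u)) <= delta)
  (J_coercive : forall u, DX u ->
     hnorm ipX u ^+ 2 <= hnorm ipY (J u) ^+ 2 + nu * Re (aX u u)).

Lemma dist_out_resolvent_spectrum_le :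
  (dist_out (real_spectrum ipX RX `&` [set x : R | (d <= x <= 1)%R])
            (real_spectrum ipY RY)
     <= (delta / Num.sqrt (1 - nu * (d^-1 - 1)))%:E)%E.
Proof.
have RX_lin := resolvent_linear hipX haX hAX hRX.
have RY_lin := resolvent_linear hipY haY hAY hRY.
have RY_contr := resolvent_contraction hipY haY hAY hRY.
have [MJ MJ_ge0 J_bd] := bounded_linear_bound hJ.
have defect_lin : is_linear (fun u => J (RX u) - RY (J u)).
  by apply: is_linear_sub; apply: is_linear_comp => //; case: hJ.
have defect_bd u : hnorm ipY (J (RX u) - RY (J u)) <= (MJ + MJ) * hnorm ipX u.
  apply: (le_trans (ler_hnormB hipY _ _)); rewrite mulrDl lerD //.
    apply: (le_trans (J_bd _)); apply: ler_wpM2l => //.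
    exact: (resolvent_contraction hipX haX hAX hRX).
  exact: le_trans (RY_contr _) (J_bd _).
have J_intertwine u : hnorm ipY (J (RX u) - RY (J u)) <= delta * hnorm ipX u.
  exact: le_trans (hnorm_le_opnorm hipX hipY defect_lin defect_bd u)
    (ler_wpM2r (hnorm_ge0 _ _) defect_le).
exact: (dist_out_spectrum_le hipX hipY completeX RX_lin
  (Re_resolvent_sym hipX haX hAX hRX) (resolvent_contraction hipX haX hAX hRX)
  (resolvent_D hAX hRX) (Re_form_resolvent hipX hAX hRX)
  RY_lin (Re_resolvent_sym hipY haY hAY hRY) RY_contr
  hJ.1 MJ_ge0 J_bd delta_ge0 nu_ge0 d_gt0 d_lt1 nu_lt J_intertwine J_coercive).
Qed.

End ResolventComparison.

Theorem theorem5 (R : realType)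
  (H : lmodType R[i]) (ipH : H -> H -> R[i]) (hH : is_separable_hilbert ipH)
  (D : set H) (a : H -> H -> R[i]) (ha : closed_dd_nonneg_form ipH D a)
  (DA : set H) (A : H -> H) (hA : associated_operator ipH D a DA A)
  (Rs : H -> H) (hRs : is_resolvent DA A Rs)
  (He : lmodType R[i]) (ipHe : He -> He -> R[i]) (hHe : is_separable_hilbert ipHe)
  (De : set He) (ae : He -> He -> R[i]) (hae : closed_dd_nonneg_form ipHe De ae)
  (DAe : set He) (Ae : He -> He) (hAe : associated_operator ipHe De ae DAe Ae)
  (Rse : He -> He) (hRse : is_resolvent DAe Ae Rse)
  (J : H -> He) (Jc : He -> H)
  (hJ : bounded_linear ipH ipHe J) (hJc : bounded_linear ipHe ipH Jc)
  (delta deltac nu nuc : R)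
  (hdelta : 0 <= delta) (hdeltac : 0 <= deltac) (hnu : 0 <= nu) (hnuc : 0 <= nuc)
  (h1 : opnorm ipH ipHe (fun f => Rse (J f) - J (Rs f)) <= delta)
  (h2 : opnorm ipHe ipH (fun u => Jc (Rse u) - Rs (Jc u)) <= deltac)
  (h3 : forall f, D f ->
      hnorm ipH f ^+ 2 <= hnorm ipHe (J f) ^+ 2 + nu * complex.Re (a f f))
  (h4 : forall u, De u ->
      hnorm ipHe u ^+ 2 <= hnorm ipH (Jc u) ^+ 2 + nuc * complex.Re (ae u u))
  (d : R) (hd : 0 < d < 1)
  (hnud : nu < d / (1 - d)) (hnucd : nuc < d / (1 - d)) :
  (dist_out (real_spectrum ipHe Rse `&` [set x : R | (d <= x <= 1)%R])
            (real_spectrum ipH Rs)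
     <= (deltac / Num.sqrt (1 - nuc * (d^-1 - 1)))%:E)%E /\
  (dist_out (real_spectrum ipH Rs `&` [set x : R | (d <= x <= 1)%R])
            (real_spectrum ipHe Rse)
     <= (delta / Num.sqrt (1 - nu * (d^-1 - 1)))%:E)%E.
Proof.
case: hH => ipH_inner complete_H _; case: hHe => ipHe_inner complete_He _.
case/andP: hd => d_gt0 d_lt1; split.
  exact: (dist_out_resolvent_spectrum_le ipHe_inner ipH_inner complete_He hae hAe hRse
    ha hA hRs hJc hdeltac hnuc d_gt0 d_lt1 hnucd h2 h4).
apply: (dist_out_resolvent_spectrum_le ipH_inner ipHe_inner complete_H ha hA hRs
  hae hAe hRse hJ hdelta hnu d_gt0 d_lt1 hnud _ h3).
by rewrite (opnorm_distC _ ipHe_inner).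
Qed.
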